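(* Let $N_1\ge\cdots\ge N_C\ge1$ be class sizes with $N=\sum_y N_y$ and $\pi_y=N_y/N$. Suppose the local Lipschitz constants satisfy $\mu_y=c\,N_y^{-\kappa}$ for a constant $c>0$ and $\kappa>1$, let $\mu=\max_y\mu_y$ be the corresponding global Lipschitz constant, and suppose the empirical complexities scale as $\hat{\mathfrak{C}}_{\mathcal{S}}(\mathcal{F})=K/\sqrt{N}$ and $\hat{\mathfrak{C}}_{\mathcal{S}_y}(\mathcal{F})=K/\sqrt{N_y}$ for a constant $K>0$. Then the complexity term of the data-dependent bound is no larger than that of the union bound: $$\frac{\hat{\mathfrak{C}}_{\mathcal{S}}(\mathcal{F})}{C\pi_C}\sum_{y=1}^C\mu_y\sqrt{\pi_y}\;\le\;\frac{\mu}{C}\sum_{y=1}^C\hat{\mathfrak{C}}_{\mathcal{S}_y}(\mathcal{F}).$$ That is, the data-dependent bound (with complexity term on the left) is sharper than the union bound (with complexity term on the right).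
   Context: Context: two generalization bounds for the balanced risk in imbalanced classification with $C$ classes are compared. The union bound has complexity term $\frac{\mu}{C}\sum_y\hat{\mathfrak{C}}_{\mathcal{S}_y}(\mathcal{F})$, obtained by bounding each class separately with a loss that is Lipschitz with global constant $\mu$; the data-dependent bound has complexity term $\frac{\hat{\mathfrak{C}}_{\mathcal{S}}(\mathcal{F})}{C\pi_C}\sum_y\mu_y\sqrt{\pi_y}$, where $\mu_y$ are local Lipschitz constants: $|L(f(\boldsymbol{x}),y)-L(f'(\boldsymbol{x}),y)|\le\mu_y\|f(\boldsymbol{x})-f'(\boldsymbol{x})\|_2$ for all $\boldsymbol{x}\in\mathcal{S}_y$. Here $\hat{\mathfrak{C}}_{\mathcal{S}}(\mathcal{F})$ denotes the empirical (Rademacher-type) complexity of the score-function class $\mathcal{F}$ on the whole training set $\mathcal{S}$ and $\hat{\mathfrak{C}}_{\mathcal{S}_y}(\mathcal{F})$ that on the class-$y$ subsample $\mathcal{S}_y$ of size $N_y$. *)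

From mathcomp Require Import all_boot all_order all_algebra.
From mathcomp Require Import all_classical all_reals all_analysis.
Set Implicit Arguments. Unset Strict Implicit. Unset Printing Implicit Defensive.
Import Order.TTheory GRing.Theory Num.Theory.
Local Open Scope ring_scope.

Definition Ntot (C : nat) (N : nat -> nat) : nat := (\sum_(1 <= y < C.+1) N y)%N.

Definition prop_class {R : realType} (C : nat) (N : nat -> nat) (y : nat) : R :=
  (N y)%:R / (Ntot C N)%:R.

(* Compare the two complexity terms summand by summand: the y-th summand on the
   left is K μ_y √N_y / (C N_C) and the one on the right is μ K / (C √N_y), so it
   suffices that μ_y N_y ≤ μ N_C.  Since κ > 1, the map
   x ↦ c x^(-κ) x = c x^(1-κ) is nonincreasing, hence μ_y N_y ≤ μ_C N_C ≤ μ N_C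
   because N_C is the smallest class size. *)
From mathcomp Require Import all_boot all_order all_algebra.
From mathcomp Require Import all_classical all_reals all_analysis.
From mathcomp Require Import ring lra.
Import Order.TTheory GRing.Theory Num.Theory.
Local Open Scope ring_scope.

Lemma powRN_mulr (R : realType) (x k : R) : 0 < x ->
  x `^ (- k) * x = (x `^ (k - 1))^-1.
Proof.
move=> x_gt0; rewrite -{2}(powRr1 (ltW x_gt0)) -powRD; last first.
  by apply/implyP => _; rewrite gt_eqF.
by rewrite -powRN opprB addrC.
Qed.

Lemma ge_powRN_mulr (R : realType) (a b k : R) : 0 < b -> b <= a -> 1 <= k ->
  a `^ (- k) * a <= b `^ (- k) * b.
Proof.
move=> b_gt0 le_ba k_ge1; have a_gt0 : 0 < a by exact: lt_le_trans le_ba.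
rewrite !powRN_mulr // lef_pV2 ?posrE ?powR_gt0 //.
by apply: ge0_ler_powR; rewrite ?nnegrE; lra.
Qed.

Lemma le_complexity_summand (R : rcfType) (K Cr Nt nC n m M : R) :
  0 <= K -> 0 < Cr -> 0 < Nt -> 0 < nC -> 0 < n -> m * n <= M * nC ->
  K / Num.sqrt Nt / (Cr * (nC / Nt)) * (m * Num.sqrt (n / Nt))
  <= M / Cr * (K / Num.sqrt n).
Proof.
move=> K_ge0 Cr_gt0 Nt_gt0 nC_gt0 n_gt0 le_mn.
rewrite (sqrtrM _ (ltW n_gt0)) (sqrtrV (ltW Nt_gt0)).
have a_gt0 : 0 < Num.sqrt n by rewrite sqrtr_gt0.
have s_gt0 : 0 < Num.sqrt Nt by rewrite sqrtr_gt0.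
have n_sq : n = Num.sqrt n ^+ 2 by rewrite sqr_sqrtr // ltW.
have Nt_sq : Nt = Num.sqrt Nt ^+ 2 by rewrite sqr_sqrtr // ltW.
set a := Num.sqrt n in a_gt0 n_sq *; set s := Num.sqrt Nt in s_gt0 Nt_sq *.
rewrite Nt_sq; rewrite n_sq in le_mn.
have -> : K / s / (Cr * (nC / s ^+ 2)) * (m * (a * s^-1))
    = K / (Cr * nC * a) * (m * a ^+ 2).
  by field; rewrite !gt_eqF.
have -> : M / Cr * (K / a) = K / (Cr * nC * a) * (M * nC).
  by field; rewrite !gt_eqF.
have den_gt0 : 0 < Cr * nC * a by rewrite !mulr_gt0.
apply: ler_wpM2l le_mn; exact: divr_ge0 K_ge0 (ltW den_gt0).
Qed.

Theorem proposition2 (R : realType) (C : nat) (N : nat -> nat)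
    (c kappa K : R) (mu : nat -> R) (mumax : R) (CS : R) (CSy : nat -> R) :
  (1 <= C)%N ->
  (forall i j, (1 <= i)%N -> (i <= j)%N -> (j <= C)%N -> (N j <= N i)%N) ->
  (1 <= N C)%N ->
  0 < c -> 1 < kappa -> 0 < K ->
  (forall y, (1 <= y <= C)%N -> mu y = c * ((N y)%:R `^ (- kappa))) ->
  mumax = \big[Num.max/0]_(1 <= y < C.+1) mu y ->
  CS = K / Num.sqrt ((Ntot C N)%:R) ->
  (forall y, (1 <= y <= C)%N -> CSy y = K / Num.sqrt ((N y)%:R)) ->
  CS / (C%:R * prop_class C N C) * (\sum_(1 <= y < C.+1) mu y * Num.sqrt (prop_class C N y))
  <= mumax / C%:R * (\sum_(1 <= y < C.+1) CSy y).
Proof.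
move=> C_ge1 N_antitone NC_ge1 c_gt0 kappa_gt1 K_gt0 mu_def mumax_def CS_def CSy_def.
have C_mem : (1 <= C <= C)%N by rewrite C_ge1 leqnn.
have NC_gt0 : 0 < (N C)%:R :> R by rewrite ltr0n.
have Ntot_gt0 : (0 < Ntot C N)%N.
  by rewrite /Ntot big_nat_recr //= addn_gt0 NC_ge1 orbT.
have muC_le : mu C <= mumax.
  by rewrite mumax_def; apply: le_bigmax_seq; rewrite ?mem_index_iota.
rewrite !mulr_sumr; apply: ler_sum_nat => y /andP[y_ge1 y_le]; rewrite ltnS in y_le.
have y_mem : (1 <= y <= C)%N by rewrite y_ge1 y_le.
have NyC : (N C)%:R <= (N y)%:R :> R by rewrite ler_nat N_antitone.
have Ny_gt0 : 0 < (N y)%:R :> R by exact: lt_le_trans NC_gt0 NyC.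
have mu_mul_le : mu y * (N y)%:R <= mumax * (N C)%:R.
  apply: le_trans (ler_wpM2r (ltW NC_gt0) muC_le).
  rewrite !mu_def // -!mulrA; apply: ler_wpM2l; first exact: ltW.
  exact: ge_powRN_mulr NC_gt0 NyC (ltW kappa_gt1).
rewrite CS_def CSy_def // /prop_class.
apply: le_complexity_summand => //; rewrite ?ltr0n //; exact: ltW.
Qed.
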